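(* Let $G$ be a finite simple undirected graph and let $A, B, C$ be $\omega(G)$-cliques of $G$ that are pairwise adjacent in $\mathsf{TJ}_{\omega(G)}(G)$. Then $A \cap B = B \cap C = A \cap C$.
   Context: $\omega(G)$ is the maximum size of a clique (set of pairwise adjacent vertices) of $G$. For an integer $k$, $\mathsf{TJ}_k(G)$ (token jumping graph) is the graph whose vertices are the cliques of $G$ of size $k$, two such cliques $C, C'$ being adjacent iff $|C \setminus C'| = |C' \setminus C| = 1$. *)

From mathcomp Require Import all_boot.
Set Implicit Arguments. Unset Strict Implicit. Unset Printing Implicit Defensive.

Definition simple_graph (T : finType) (e : rel T) : Prop :=
  symmetric e /\ irreflexive e.

Definition is_clique (T : finType) (e : rel T) (A : {set T}) : bool :=
  [forall x in A, forall y in A, (x != y) ==> e x y].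

Definition clique_number (T : finType) (e : rel T) : nat :=
  \max_(A : {set T} | is_clique e A) #|A|.

Definition is_kclique (T : finType) (e : rel T) (k : nat) (A : {set T}) : bool :=
  is_clique e A && (#|A| == k).

Definition TJ_adj (T : finType) (e : rel T) (k : nat) (C D : {set T}) : bool :=
  [&& is_kclique e k C, is_kclique e k D,
      #|C :\: D| == 1 & #|D :\: C| == 1].

From mathcomp Require Import all_boot.

Set Implicit Arguments.
Unset Strict Implicit.
Unset Printing Implicit Defensive.

(* Write w for the clique number. Suppose x lies in A and B but not in C.
   Since C misses exactly one vertex of A and one of B, x is that vertex both
   times, so C contains every vertex of A and of B other than x. Hence the
   vertex of A :\: B and the vertex of B :\: A both lie in the clique C and are
   adjacent, which makes A :|: B a clique on w + 1 vertices, a contradiction. So A :&: B is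
   contained in C, and comparing cardinalities gives the equalities. *)

Section Sets.

Variable T : finType.
Implicit Types A B C : {set T}.

Lemma cardsUD A B : #|A :|: B| = #|A| + #|B :\: A|.
Proof.
by rewrite -(cardsID A (A :|: B)) (setIidPr (subsetUl A B)) setDUl setDv set0U.
Qed.

Lemma setD1_subset_cardsD1 A C x :
  #|A :\: C| = 1 -> x \in A :\: C -> A :\ x \subset C.
Proof.
move=> /eqP /cards1P [y defD]; rewrite defD inE => /eqP ->.
apply/subsetP => u; rewrite !inE => /andP [uy uA]; apply/negPn/negP => uC.
have : u \in A :\: C by rewrite inE uC uA.
by rewrite defD inE (negbTE uy).
Qed.

Lemma setI_eq_subset_cardsD A B C :
  A :&: B \subset C -> #|B :\: A| = #|B :\: C| -> A :&: B = B :&: C.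
Proof.
move=> subC cardD.
have cardI : #|B :&: A| = #|B :&: C|.
  by apply/eqP; rewrite -(eqn_add2r #|B :\: A|) {2}cardD !cardsID.
apply/eqP; rewrite eqEcard subsetI subsetIr subC /=.
by rewrite [A :&: B]setIC cardI.
Qed.

End Sets.

Section Cliques.

Variables (T : finType) (e : rel T).
Hypothesis e_sym : symmetric e.
Implicit Types A B C : {set T}.

Lemma is_cliqueP A :
  reflect {in A &, forall u v, u != v -> e u v} (is_clique e A).
Proof.
apply: (iffP forall_inP) => [cA u v uA vA | cA u uA].
  by move: (cA u uA) => /forall_inP/(_ v vA)/implyP.
by apply/forall_inP => v vA; apply/implyP; apply: cA.
Qed.

Lemma card_clique_le A : is_clique e A -> #|A| <= clique_number e.
Proof. exact: (@leq_bigmax_cond _ _ (fun X : {set T} => #|X|) A). Qed.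

Lemma clique_setU A B :
  is_clique e A -> is_clique e B ->
  {in A :\: B & B :\: A, forall u v, e u v} -> is_clique e (A :|: B).
Proof.
move=> /is_cliqueP cA /is_cliqueP cB cross; apply/is_cliqueP.
have crossC u v : u \in A -> v \in B -> u != v -> e u v.
  move=> uA vB uv; case uB: (u \in B); first exact: cB.
  case vA: (v \in A); first exact: cA.
  by apply: cross; rewrite inE ?uB ?vA.
move=> u v /setUP [uA | uB] /setUP [vA | vB] uv.
- exact: cA.
- exact: crossC.
- by rewrite e_sym; apply: crossC; rewrite // eq_sym.
- exact: cB.
Qed.

Lemma max_cliques_setI_subset A B C :
  is_kclique e (clique_number e) A -> is_kclique e (clique_number e) B ->
  is_clique e C ->
  #|B :\: A| = 1 -> #|A :\: C| = 1 -> #|B :\: C| = 1 ->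
  A :&: B \subset C.
Proof.
move=> /andP [cA /eqP cardA] /andP [cB _] /is_cliqueP cC cardBA cardAC cardBC.
apply/subsetP => x; rewrite inE => /andP [xA xB]; apply/negPn/negP => xC.
have AxC : A :\ x \subset C by apply: setD1_subset_cardsD1; rewrite ?inE ?xC.
have BxC : B :\ x \subset C by apply: setD1_subset_cardsD1; rewrite ?inE ?xC.
have cAB : is_clique e (A :|: B).
  apply: clique_setU => // u v; rewrite !inE => /andP [uB uA] /andP [vA vB].
  have ux : u != x by apply: contraNneq uB => ->.
  have vx : v != x by apply: contraNneq vA => ->.
  apply: cC.
  - by apply: (subsetP AxC); rewrite !inE ux.
  - by apply: (subsetP BxC); rewrite !inE vx.
  - by apply: contraNneq uB => ->.
by have := card_clique_le cAB; rewrite cardsUD cardA cardBA addn1 ltnn.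
Qed.

End Cliques.

Theorem lemma4p2 (T : finType) (e : rel T) (A B C : {set T}) :
  simple_graph e ->
  TJ_adj e (clique_number e) A B ->
  TJ_adj e (clique_number e) B C ->
  TJ_adj e (clique_number e) A C ->
  A :&: B = B :&: C /\ B :&: C = A :&: C.
Proof.
move=> [e_sym _] /and4P [kA kB /eqP cardAB /eqP cardBA].
move=> /and4P [_ kC /eqP cardBC /eqP cardCB] /and4P [_ _ /eqP cardAC /eqP cardCA].
have AB_sub_C := max_cliques_setI_subset e_sym kA kB (andP kC).1 cardBA cardAC cardBC.
have AC_sub_B := max_cliques_setI_subset e_sym kA kC (andP kB).1 cardCA cardAB cardCB.
split; first by apply: setI_eq_subset_cardsD; rewrite ?cardBA.
by rewrite setIC -(setI_eq_subset_cardsD AC_sub_B) ?cardCA.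
Qed.
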